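(* Let $0<q<1$ and let $A_q(t)=\sum_{n=0}^{\infty}A_{n,q}\dfrac{t^n}{[n]_q!}$ be a power series, analytic at $t=0$, with $A_q(0)=A_{0,q}\neq 0$. Define the $q$-Appell polynomials $A_{n,q}(x)$ by \[ A_q(t)\,e_q(tx)=\sum_{n=0}^{\infty}A_{n,q}(x)\frac{t^n}{[n]_q!}. \] Assume that \[ t\,\frac{D_{q,t}A_q(t)}{A_q(qt)}=\sum_{n=0}^{\infty}\alpha_n\frac{t^n}{[n]_q!}. \] Then for every positive integer $n$ the polynomial $A_{n,q}(x)$ satisfies the $q$-difference equation \[ \sum_{k=0}^{n}\frac{q^{n-k}\alpha_k}{[k]_q!}D_{q,x}^{k}A_{n,q}(x)+x\,q^{n}D_{q,x}A_{n,q}(x)-[n]_qA_{n,q}(qx)=0, \] i.e. \[ \frac{\alpha_n}{[n]_q!}D_{q,x}^nA_{n,q}(x)+\frac{q\alpha_{n-1}}{[n-1]_q!}D_{q,x}^{n-1}A_{n,q}(x)+\dots+\frac{q^{n-1}\alpha_1}{[1]_q!}D_{q,x}A_{n,q}(x)+\frac{q^n\alpha_0}{[0]_q!}A_{n,q}(x)+xq^nD_{q,x}A_{n,q}(x)-[n]_qA_{n,q}(qx)=0. \]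
   Context: $[n]_q=\frac{1-q^n}{1-q}$, $[0]_q!=1$, $[n]_q!=[n]_q[n-1]_q\cdots[1]_q$. The $q$-exponential is $e_q(t)=\sum_{n=0}^\infty \frac{t^n}{[n]_q!}$. The $q$-derivative is $D_{q,x}f(x)=\frac{f(qx)-f(x)}{(q-1)x}$ (for $x\neq0$; on polynomials/power series $D_{q,x}x^n=[n]_qx^{n-1}$); $D_{q,t}$ is the same operator in the variable $t$, and $D_{q,x}^k$ denotes the $k$-fold iterate ($D_{q,x}^0$ = identity). *)

From HB Require Import structures.
From mathcomp Require Import all_boot all_order all_algebra.
From mathcomp Require Import all_classical all_reals all_analysis.
Set Implicit Arguments. Unset Strict Implicit. Unset Printing Implicit Defensive.
Import Order.TTheory GRing.Theory Num.Theory.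
Local Open Scope ring_scope.

Section QCalc.
Variable R : realType.

Definition qint (q : R) (n : nat) : R := (1 - q ^+ n) / (1 - q).

Definition qfact (q : R) (n : nat) : R := \prod_(i < n) qint q i.+1.

(* q-derivative on polynomials: D_{q,x} x^n = [n]_q x^(n-1), extended linearly *)
Definition qderiv (q : R) (p : {poly R}) : {poly R} :=
  \poly_(i < (size p).-1) (qint q i.+1 * p`_i.+1).

Definition qderivn (q : R) (k : nat) (p : {poly R}) : {poly R} :=
  iter k (qderiv q) p.

(* Formal power series in t, given by their ordinary coefficient sequence
   (f n = coefficient of t^n). *)
Definition fps := nat -> R.

(* the series sum_n c_n t^n/[n]_q! *)
Definition qexp_series (q : R) (c : nat -> R) : fps := fun n => c n / qfact q n.

Definition fps_mul (f g : fps) : fps :=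
  fun n => \sum_(k < n.+1) f k * g (n - k)%N.

(* D_{q,t} on formal power series: D_q t^n = [n]_q t^(n-1) *)
Definition fps_qderiv (q : R) (f : fps) : fps := fun n => qint q n.+1 * f n.+1.

Definition fps_mulX (f : fps) : fps :=
  fun n => if n is m.+1 then f m else 0.

(* f(t) |-> f(c t) *)
Definition fps_scale (c : R) (f : fps) : fps := fun n => c ^+ n * f n.

(* q-Appell polynomials: A_{n,q}(x) is [n]_q! times the coefficient of t^n in
   the Cauchy product A_q(t) e_q(tx), where A_q(t) = sum a_n t^n/[n]_q!
   and e_q(tx) = sum x^m t^m/[m]_q!. *)
Definition qAppell (q : R) (a : nat -> R) (n : nat) : {poly R} :=
  qfact q n *: \sum_(k < n.+1)
     ((a k / qfact q k) * (1 / qfact q (n - k)%N)) *: 'X^(n - k).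

End QCalc.

From HB Require Import structures.
From mathcomp Require Import all_boot all_order all_algebra.
From mathcomp Require Import all_classical all_reals all_analysis.
From mathcomp Require Import ring zify.
Import Order.TTheory GRing.Theory Num.Theory.
Import numFieldNormedType.Exports.
Local Open Scope ring_scope.

(* Compare coefficients of x^i and put m = n - i.  The x^i coefficient of
   A_{n,q} is [n]!/([i]! [m]!) a_m, and D_q^k brings down the x^(i+k)
   coefficient with the factor [i+k]!/[i]!; hence the alpha-sum contributes
   q^i [n]!/[i]! times the t^m coefficient of (sum alpha_k t^k/[k]!) A_q(qt),
   which by hypothesis is [m] a_m/[m]!.  What is left is [n] = [m] + q^m [i]. *)

Lemma coef_comp_scaleX (R : comNzRingType) (c : R) (p : {poly R}) i :
  (p \Po (c *: 'X))`_i = c ^+ i * p`_i.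
Proof.
rewrite comp_polyE coef_sum.
under eq_bigr do rewrite exprZn scalerA coefZ coefXn.
have [i_lt | i_ge] := ltnP i (size p).
  rewrite (bigD1 (Ordinal i_lt)) //= eqxx mulr1 big1 ?addr0 1?mulrC // => j.
  by rewrite -val_eqE eq_sym => /negbTE /= ->; rewrite mulr0.
rewrite nth_default // mulr0 big1 // => j _.
by rewrite gtn_eqF ?mulr0 // (leq_trans _ i_ge).
Qed.

Section QCalculus.
Variables (R : realType) (q : R).

Lemma qint0 : qint q 0 = 0.
Proof. by rewrite /qint expr0 subrr mul0r. Qed.

Lemma qintD m n : qint q (m + n) = qint q m + q ^+ m * qint q n.
Proof. by rewrite /qint exprD mulrA -mulrDl; congr (_ / _); ring. Qed.

Lemma qfactS n : qfact q n.+1 = qfact q n * qint q n.+1.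
Proof. by rewrite /qfact big_ord_recr. Qed.

Lemma coef_qderiv p i : (qderiv q p)`_i = qint q i.+1 * p`_i.+1.
Proof.
rewrite /qderiv coef_poly; case: ltnP => // size_le.
by rewrite nth_default ?mulr0 // (leq_trans (leqSpred _)).
Qed.

Lemma coef_mulX_qderiv p i : ('X * qderiv q p)`_i = qint q i * p`_i.
Proof. by rewrite coefXM; case: i => [|i]; rewrite ?qint0 ?mul0r // coef_qderiv. Qed.

Hypotheses (q_gt0 : 0 < q) (q_lt1 : q < 1).

Lemma qint_gt0 n : 0 < qint q n.+1.
Proof. by apply: divr_gt0; rewrite subr_gt0 // exprn_ilt1 ?ltW. Qed.

Lemma qfact_neq0 n : qfact q n != 0.
Proof. by rewrite gt_eqF // prodr_gt0 // => i _; exact: qint_gt0. Qed.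

Lemma coef_qderivn k p i :
  (qderivn q k p)`_i = qfact q (i + k) / qfact q i * p`_(i + k).
Proof.
elim: k i => [|k IHk] i; first by rewrite addn0 divff ?mul1r // qfact_neq0.
rewrite /qderivn iterS -/(qderivn q k p) coef_qderiv IHk addSnnS qfactS.
by field; rewrite qfact_neq0 gt_eqF ?qint_gt0.
Qed.

Lemma coef_qAppell a n i : (qAppell q a n)`_i =
  if (i <= n)%N then qfact q n / qfact q i * (a (n - i)%N / qfact q (n - i)%N)
  else 0.
Proof.
have -> : qAppell q a n = \poly_(i < n.+1)
    (qfact q n / qfact q i * (a (n - i)%N / qfact q (n - i)%N)).
  rewrite /qAppell poly_def scaler_sumr (reindex_inj rev_ord_inj) /=.
  apply: eq_bigr => k _; rewrite scalerA subSS subKn ?leq_ord //; congr (_ *: _).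
  by rewrite mul1r; ring.
by rewrite coef_poly ltnS.
Qed.

Variables a alpha : nat -> R.
Hypothesis alpha_quotient :
  fps_mul (qexp_series q alpha) (fps_scale q (qexp_series q a))
    = fps_mulX (fps_qderiv q (qexp_series q a)).

Lemma alpha_convolution m :
  \sum_(k < m.+1) alpha k / qfact q k * (q ^+ (m - k) * (a (m - k)%N / qfact q (m - k)%N))
  = qint q m * (a m / qfact q m).
Proof.
have := congr1 (fun f => f m) alpha_quotient.
by rewrite /fps_mul /fps_scale /qexp_series /=; case: m => [|m] /= ->; rewrite ?qint0 ?mul0r.
Qed.

Lemma coef_alpha_qderivn_qAppell n i : (i <= n)%N ->
  \sum_(k < n.+1) q ^+ (n - k) * alpha k / qfact q k * (qderivn q k (qAppell q a n))`_i
  = q ^+ i * qint q (n - i) * (qAppell q a n)`_i.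
Proof.
move=> le_in; set m := (n - i)%N; set F := fun k : nat =>
  q ^+ (n - k) * alpha k / qfact q k * (qderivn q k (qAppell q a n))`_i.
have le_mn : (m.+1 <= n.+1)%N by rewrite ltnS leq_subr.
rewrite (bigID (fun k : 'I_n.+1 => (k < m.+1)%N)) /= [X in _ + X]big1 ?addr0.
  rewrite -(big_ord_widen _ F le_mn) coef_qAppell le_in -/m.
  transitivity (qfact q n / qfact q i * q ^+ i * \sum_(k < m.+1)
    alpha k / qfact q k * (q ^+ (m - k) * (a (m - k)%N / qfact q (m - k)%N))).
    rewrite mulr_sumr; apply: eq_bigr => k _; have := ltn_ord k.
    rewrite /F coef_qderivn coef_qAppell => lt_km; rewrite ifT; last by lia.
    have -> : (n - (i + k) = m - k)%N by lia.
    have -> : (n - k = i + (m - k))%N by lia.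
    by rewrite exprD; field; rewrite !qfact_neq0.
  by rewrite alpha_convolution; field; rewrite !qfact_neq0.
move=> k; rewrite -leqNgt => lt_mk.
by rewrite /F coef_qderivn coef_qAppell ifF ?mulr0 //; lia.
Qed.

Lemma qAppell_qdifference n :
  \sum_(k < n.+1) (q ^+ (n - k) * alpha k / qfact q k) *: qderivn q k (qAppell q a n)
    + q ^+ n *: ('X * qderiv q (qAppell q a n))
  = qint q n *: (qAppell q a n \Po (q *: 'X)).
Proof.
apply/polyP => i; rewrite coefD !coefZ coef_sum coef_mulX_qderiv coef_comp_scaleX.
under eq_bigr do rewrite coefZ.
have [le_in | lt_ni] := leqP i n.
  rewrite coef_alpha_qderivn_qAppell //.
  have -> : qint q n = qint q (n - i) + q ^+ (n - i) * qint q i.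
    by rewrite -qintD subnK.
  have -> : q ^+ n = q ^+ (n - i) * q ^+ i by rewrite -exprD subnK.
  by ring.
have P_i : (qAppell q a n)`_i = 0 by rewrite coef_qAppell leqNgt lt_ni.
rewrite P_i !mulr0 addr0 big1 // => k _.
by rewrite coef_qderivn coef_qAppell ifF ?mulr0 //; lia.
Qed.

End QCalculus.

Theorem theorem2 (R : realType) (q : R) (a alpha : nat -> R) :
  0 < q -> q < 1 ->
  (exists r : R, 0 < r /\
     cvgn (series (fun n => `|a n / qfact q n| * r ^+ n) : nat -> R)) ->
  a 0%N != 0 ->
  fps_mul (qexp_series q alpha) (fps_scale q (qexp_series q a))
    = fps_mulX (fps_qderiv q (qexp_series q a)) ->
  forall n : nat, (0 < n)%N ->
  forall x : R,
    \sum_(k < n.+1)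
        (q ^+ (n - k) * alpha k / qfact q k) * (qderivn q k (qAppell q a n)).[x]
    + x * q ^+ n * (qderiv q (qAppell q a n)).[x]
    - qint q n * (qAppell q a n).[q * x] = 0.
Proof.
move=> q_gt0 q_lt1 _ _ alpha_quotient n _ x.
have := congr1 (horner^~ x) (@qAppell_qdifference R q q_gt0 q_lt1 a alpha alpha_quotient n).
rewrite /= hornerD horner_sum hornerZ hornerM hornerX [(qint q n *: _).[x]]hornerZ.
rewrite horner_comp [(q *: 'X).[x]]hornerZ hornerX => <-.
apply/eqP; rewrite subr_eq0; apply/eqP; congr (_ + _); last by rewrite mulrCA mulrA.
by apply: eq_bigr => k _; rewrite hornerZ.
Qed.
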